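(* For every odd integer $k\ge 5$, the graph $F_2(k)$ is word-representable.
   Context: For odd $k\ge5$, $F_2(k)$ is the split graph with clique $C=\{c_1,\dots,c_k\}$ and independent set $I=\{b,a_1,\dots,a_{k-1}\}$, where $N(b)=\{c_2,\dots,c_{k-1}\}$ and $N(a_i)=\{c_i,c_{i+1}\}$ for $1\le i\le k-1$. A graph $G=(V,E)$ is word-representable if there is a word $w$ over $V$ such that for all distinct $a,b\in V$, $ab\in E$ iff $a$ and $b$ alternate in $w$ (i.e. the subsequence of $w$ formed by all occurrences of $a$ and $b$ is $abab\cdots$ or $baba\cdots$). *)

From mathcomp Require Import all_boot.
Set Implicit Arguments. Unset Strict Implicit. Unset Printing Implicit Defensive.

(* Vertex type of F_2(k):
   inl i        = c_{i+1}   (i : 'I_k, so c_1..c_k)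
   inr None     = b
   inr (Some i) = a_{i+1}   (i : 'I_(k.-1), so a_1..a_{k-1}) *)
Definition F2V (k : nat) : finType := ('I_k + option 'I_(k.-1))%type.

Definition F2adj (k : nat) (x y : F2V k) : bool :=
  match x, y with
  | inl i, inl j => i != j :> nat
  | inl i, inr None | inr None, inl i => (1 <= i) && (i <= k - 2)  (* N(b) = {c_2..c_{k-1}} *)
  | inl j, inr (Some i) | inr (Some i), inl j =>
      (j == i :> nat) || (j == i.+1 :> nat)                    (* N(a_i) = {c_i, c_{i+1}} *)
  | inr _, inr _ => false
  end.

Definition alternate (T : eqType) (w : seq T) (x y : T) : Prop :=
  let s := [seq z <- w | (z == x) || (z == y)] in
  forall i, i.+1 < size s -> nth x s i != nth x s i.+1.

Definition word_representable (V : finType) (adj : V -> V -> bool) : Prop :=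
  exists w : seq V, (forall v : V, v \in w) /\
    forall a b : V, a != b -> (adj a b <-> alternate w a b).

From mathcomp Require Import all_boot zify.
Set Implicit Arguments. Unset Strict Implicit. Unset Printing Implicit Defensive.

(* An explicit word works.  With
   1-based indices it is the concatenation of five blocks
     c1 | c2 a1 | c3 a2 | ... | c(k-1) a(k-2) b | ck a(k-1)
     c1 c2 ... ck
     a(k-1) b a(k-2) ... a1
     c1 c2 ... ck
     a1 c1 | b a2 c2 | a3 c3 | ... | a(k-1) c(k-1) | ck
   in which every letter occurs at most once per block.  For a pair of letters
   only one or two sub-blocks of each block contain them, so the restriction of
   the word to the pair is computed explicitly in each case, and alternation is
   read off that short word. *)

Lemma flatten_map_support (T : eqType) (U : Type) (F : T -> seq U) (p : pred T) s :
  (forall x, x \in s -> ~~ p x -> F x = [::]) ->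
  flatten (map F s) = flatten (map F (filter p s)).
Proof.
elim: s => //= x s IH F0; rewrite IH => [|y ys]; last by apply: F0; rewrite inE ys orbT.
by case: ifP => //= /negbT /(F0 x (mem_head x s)) ->.
Qed.

Lemma flatten_iota_support (U : Type) (F : nat -> seq U) n js :
  sorted ltn js -> all (fun j => j < n) js ->
  (forall j, j < n -> j \notin js -> F j = [::]) ->
  flatten (map F (iota 0 n)) = flatten (map F js).
Proof.
move=> js_sorted js_lt F0; rewrite (@flatten_map_support _ _ F (mem js)).
  congr (flatten (map F _)); apply: (irr_sorted_eq ltn_trans ltnn).
  - exact/sorted_filter/iota_ltn_sorted/ltn_trans.
  - exact: js_sorted.
  - by move=> j; rewrite mem_filter mem_iota /=; apply/andb_idr => /(allP js_lt).
by move=> j; rewrite mem_iota => /F0.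
Qed.

Lemma mem_flatten_iota (U : eqType) (F : nat -> seq U) n z :
  reflect (exists2 j, j < n & z \in F j) (z \in flatten (map F (iota 0 n))).
Proof.
apply: (iffP flattenP) => [[s /mapP[j]] | [j jn zF]].
  by rewrite mem_iota => jn -> zF; exists j.
by exists (F j) => //; apply: map_f; rewrite mem_iota.
Qed.

Definition restrict (T : eqType) (w : seq T) (x y : T) : seq T :=
  [seq z <- w | (z == x) || (z == y)].

Lemma alternateE (T : eqType) (w : seq T) x y :
  alternate w x y <-> sorted (fun u v => u != v) (restrict w x y).
Proof. by split=> [|/sortedP]; [move=> h; apply/(sortedP x) | apply]. Qed.

Lemma alternate_sym (T : eqType) (w : seq T) x y : alternate w x y -> alternate w y x.
Proof.
rewrite !alternateE /restrict (eq_filter (a2 := fun z => (z == y) || (z == x))) //.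
by move=> z; rewrite orbC.
Qed.

Lemma alternate_map (T U : eqType) (f : T -> U) (w : seq T) x y : injective f ->
  alternate (map f w) (f x) (f y) <-> alternate w x y.
Proof.
move=> f_inj; rewrite !alternateE /restrict filter_map sorted_map.
rewrite (eq_filter (a2 := fun z => (z == x) || (z == y))) => [|z]; last by rewrite /= !inj_eq.
by rewrite (eq_sorted (e' := fun u v => u != v)) // => u v; rewrite /= inj_eq.
Qed.

(* The word is first built over nat, with b, c_(j+1), a_(i+1) coded as 0, 2j+1,
   2i+2, so that the indices can be handled by linear arithmetic. *)
Notation cv j := (2 * j + 1).
Notation av i := (2 * i + 2).

Definition block_first k : seq nat :=
  flatten [seq cv j :: (if 0 < j then [:: av (j - 1)] else [::])
                     ++ (if j == k - 2 then [:: 0] else [::]) | j <- iota 0 k].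

Definition block_clique k : seq nat := flatten [seq [:: cv j] | j <- iota 0 k].

Definition block_middle k : seq nat :=
  flatten [seq if t == 0 then [:: av (k - 2)] else if t == 1 then [:: 0]
               else [:: av (k - 1 - t)] | t <- iota 0 k].

Definition block_last k : seq nat :=
  flatten [seq (if j == 1 then [:: 0] else [::])
                ++ (if j <= k - 2 then [:: av j] else [::]) ++ [:: cv j] | j <- iota 0 k].

Definition word k : seq nat :=
  block_first k ++ block_clique k ++ block_middle k ++ block_clique k ++ block_last k.

(* [crunch] decides every (in)equality test between index expressions by [lia],
   case-splitting on the tests that the context does not decide. *)
Ltac no_if t := lazymatch t with context [if _ then _ else _] => fail | _ => idtac end.
Ltac decide_eq a b := no_if a; no_if b;
  first [ have -> : (a == b) = true by apply/eqP; lia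
        | have -> : (a == b) = false by apply/eqP; lia
        | case: (@eqP _ a b) => ? ].
Ltac decide_le a b := no_if a; no_if b;
  first [ have -> : (a <= b) = true by apply/idP; lia
        | have -> : (a <= b) = false by apply/negbTE; lia
        | case: (leqP a b) => ? ].
Ltac decide_test := match goal with
  | |- context [?a == ?b] => decide_eq a b
  | |- context [(?a <= ?b)%N] => decide_le a b
  end.
Ltac crunch := repeat (simpl; decide_test); simpl; try done;
  try (apply/eqP; rewrite /= ?eqseq_cons; repeat (simpl; decide_test); done); try (exfalso; lia).

(* [sparse_block js] rewrites the restriction of a block to the sub-blocks
   indexed by [js], all others being checked to contribute nothing. *)
Ltac sparse_block js := rewrite (@flatten_iota_support _ _ _ js);
  [ | by crunch | by crunch | by move=> ? ?; rewrite ?inE; crunch].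

(* Only four index lists for five blocks: the two copies of [block_clique] are
   rewritten together by the second one. *)
Ltac compute_restriction js0 js1 js2 js3 :=
  rewrite /restrict /word /block_first /block_clique /block_middle /block_last
          !filter_cat !filter_flatten -!map_comp;
  sparse_block js0; sparse_block js1; sparse_block js2; sparse_block js3; crunch.

Section Restrictions.
Variable k : nat.
Hypothesis k_ge5 : 5 <= k.

Lemma restrict_cc j l : j < l < k ->
  restrict (word k) (cv j) (cv l) = [:: cv j; cv l; cv j; cv l; cv j; cv l; cv j; cv l].
Proof. by move=> ?; compute_restriction [:: j; l] [:: j; l] (@nil nat) [:: j; l]. Qed.

Lemma restrict_ca_lt j i : j < i <= k - 2 ->
  restrict (word k) (cv j) (av i) = [:: cv j; av i; cv j; av i; cv j; cv j; av i].
Proof.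
by move=> ?; compute_restriction [:: j; i.+1] [:: j] [:: if i == k - 2 then 0 else k - 1 - i] [:: j; i].
Qed.

Lemma restrict_ca_adj j i : i <= k - 2 -> (j == i) || (j == i.+1) ->
  restrict (word k) (cv j) (av i) = [:: cv j; av i; cv j; av i; cv j; av i; cv j].
Proof.
move=> ? /orP[/eqP->|/eqP->].
- by compute_restriction [:: i; i.+1] [:: i] [:: if i == k - 2 then 0 else k - 1 - i] [:: i].
- by compute_restriction [:: i.+1] [:: i.+1] [:: if i == k - 2 then 0 else k - 1 - i] [:: i; i.+1].
Qed.

Lemma restrict_ca_gt j i : i.+1 < j < k ->
  restrict (word k) (cv j) (av i) = [:: av i; cv j; cv j; av i; cv j; av i; cv j].
Proof. by move=> ?; compute_restriction [:: i.+1; j] [:: j] [:: k - 1 - i] [:: i; j]. Qed.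

Lemma restrict_cb_first :
  restrict (word k) (cv 0) 0 = [:: cv 0; 0; cv 0; 0; cv 0; cv 0; 0].
Proof. by compute_restriction [:: 0; k - 2] [:: 0] [:: 1] [:: 0; 1]. Qed.

Lemma restrict_cb_inner j : 1 <= j <= k - 2 ->
  restrict (word k) (cv j) 0 = [:: cv j; 0; cv j; 0; cv j; 0; cv j].
Proof.
move=> ?; have [->|j1] := eqVneq j 1; first by compute_restriction [:: 1; k - 2] [:: 1] [:: 1] [:: 1].
have [->|jk] := eqVneq j (k - 2); first by compute_restriction [:: k - 2] [:: k - 2] [:: 1] [:: 1; k - 2].
by compute_restriction [:: j; k - 2] [:: j] [:: 1] [:: 1; j].
Qed.

Lemma restrict_cb_last :
  restrict (word k) (cv (k - 1)) 0 = [:: 0; cv (k - 1); cv (k - 1); 0; cv (k - 1); 0; cv (k - 1)].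
Proof. by compute_restriction [:: k - 2; k - 1] [:: k - 1] [:: 1] [:: 1; k - 1]. Qed.

Lemma restrict_aa i l : i < l <= k - 2 ->
  restrict (word k) (av i) (av l) = [:: av i; av l; av l; av i; av i; av l].
Proof.
move=> ?.
by compute_restriction [:: i.+1; l.+1] (@nil nat) [:: if l == k - 2 then 0 else k - 1 - l; k - 1 - i] [:: i; l].
Qed.

Lemma restrict_ab_first : restrict (word k) (av 0) 0 = [:: av 0; 0; 0; av 0; av 0; 0].
Proof. by compute_restriction [:: 1; k - 2] (@nil nat) [:: 1; k - 1] [:: 0; 1]. Qed.

Lemma restrict_ab_inner i : 1 <= i <= k - 3 ->
  restrict (word k) (av i) 0 = [:: av i; 0; 0; av i; 0; av i].
Proof.
move=> ?; have [->|i1] := eqVneq i 1; first by compute_restriction [:: 2; k - 2] (@nil nat) [:: 1; k - 2] [:: 1].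
have [->|ik] := eqVneq i (k - 3).
  by compute_restriction [:: k - 2] (@nil nat) [:: 1; 2] [:: 1; k - 3].
by compute_restriction [:: i.+1; k - 2] (@nil nat) [:: 1; k - 1 - i] [:: 1; i].
Qed.

Lemma restrict_ab_last : restrict (word k) (av (k - 2)) 0 = [:: 0; av (k - 2); av (k - 2); 0; 0; av (k - 2)].
Proof. by compute_restriction [:: k - 2; k - 1] (@nil nat) [:: 0; 1] [:: 1; k - 2]. Qed.

End Restrictions.

Section Alternation.
Variable k : nat.
Hypothesis k_ge5 : 5 <= k.

Lemma alternate_cc j l : j < k -> l < k -> j != l -> alternate (word k) (cv j) (cv l).
Proof.
move=> jk lk; case: ltngtP => // jl _; last apply: alternate_sym.
  by rewrite alternateE restrict_cc //; crunch.
by rewrite alternateE restrict_cc //; crunch.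
Qed.

Lemma alternate_ca j i : j < k -> i <= k - 2 ->
  (j == i) || (j == i.+1) <-> alternate (word k) (cv j) (av i).
Proof.
move=> jk ik; rewrite alternateE; case: (boolP ((j == i) || (j == i.+1))) => adj.
  by rewrite restrict_ca_adj //; split=> // _; crunch.
have [ji|ij] : j < i \/ i.+1 < j by lia.
  by rewrite restrict_ca_lt //; [split=> //; crunch | lia].
by rewrite restrict_ca_gt //; [split=> //; crunch | lia].
Qed.

Lemma alternate_cb j : j < k -> (1 <= j <= k - 2) <-> alternate (word k) (cv j) 0.
Proof.
move=> jk; rewrite alternateE.
have [->|j0] := eqVneq j 0; first by rewrite restrict_cb_first //; split=> //; crunch.
have [->|jk1] := eqVneq j (k - 1); first by rewrite restrict_cb_last //; split=> //; crunch.
have inner : 1 <= j <= k - 2 by lia.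
by rewrite inner restrict_cb_inner //; split=> // _; crunch.
Qed.

Lemma not_alternate_aa i l : i <= k - 2 -> l <= k - 2 -> i != l ->
  ~ alternate (word k) (av i) (av l).
Proof.
move=> ik lk; case: ltngtP => // il _; last move/alternate_sym.
  by rewrite alternateE restrict_aa //; crunch.
by rewrite alternateE restrict_aa //; crunch.
Qed.

Lemma not_alternate_ab i : i <= k - 2 -> ~ alternate (word k) (av i) 0.
Proof.
move=> ik; rewrite alternateE.
have [->|i0] := eqVneq i 0; first by rewrite restrict_ab_first //; crunch.
have [->|ik2] := eqVneq i (k - 2); first by rewrite restrict_ab_last //; crunch.
by rewrite restrict_ab_inner //; [crunch | lia].
Qed.

Lemma word_lt : all (fun z => z < 2 * k) (word k).
Proof.
rewrite /word /block_first /block_clique /block_middle /block_last !all_cat.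
by repeat (apply/andP; split); apply/allP => z /mem_flatten_iota[j jk]; move: z; apply/allP; crunch.
Qed.

End Alternation.

Definition encode k (v : F2V k) : nat :=
  match v with inl j => cv j | inr None => 0 | inr (Some i) => av i end.

Definition decode k (z : nat) : option (F2V k) :=
  if z is z'.+1 then
    if odd z' then omap (fun i => inr (Some i)) (insub z'./2 : option 'I_(k.-1))
    else omap inl (insub z'./2 : option 'I_k)
  else Some (inr None).

Lemma encodeK k : pcancel (@encode k) (@decode k).
Proof.
case=> [j|[i|]] //=.
- by rewrite addn1 /= mul2n odd_double doubleK valK.
- by rewrite addn2 /= mul2n odd_double uphalf_double valK.
Qed.

Lemma decodeK k : ocancel (@decode k) (@encode k).
Proof.
case=> //= z; have := odd_double_half z; rewrite -mul2n.
by case: ifP => _; case: insubP => //= i _ ->; lia.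
Qed.

Lemma decode_lt k z : z < 2 * k -> decode k z.
Proof.
case: z => //= z zk; have := odd_double_half z; rewrite -mul2n.
by case: ifP => _ ez; rewrite insubT //=; lia.
Qed.

Lemma mem_word_encode k (v : F2V k) : 1 < k -> encode v \in word k.
Proof.
move=> k1; have in_last z : z \in block_last k -> z \in word k.
  by rewrite /word !mem_cat => ->; rewrite !orbT.
case: v => [j|[i|]] /=.
- rewrite /word !mem_cat; apply/orP; right; apply/orP; left.
  by apply/mem_flatten_iota; exists (j : nat); rewrite ?inE.
- have ik := ltn_ord i; apply/in_last/mem_flatten_iota; exists (i : nat); first lia.
  crunch; rewrite ?inE; crunch.
- by apply/in_last/mem_flatten_iota; exists 1.
Qed.

Lemma F2adj_alternate k (u v : F2V k) : 5 <= k -> u != v ->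
  F2adj u v <-> alternate (word k) (encode u) (encode v).
Proof.
move=> k5; case: u => [i|[i|]]; case: v => [j|[j|]] /= uv.
- have ij : i != j :> nat by apply: contraNneq uv => /val_inj ->.
  by rewrite ij; split=> // _; apply: alternate_cc.
- by apply: alternate_ca => //; have := ltn_ord j; lia.
- exact: alternate_cb.
- have [adj_alt alt_adj] :
      (j == i :> nat) || (j == i.+1 :> nat) <-> alternate (word k) (cv j) (av i).
    by apply: alternate_ca => //; have := ltn_ord i; lia.
  by split=> [/adj_alt/alternate_sym | /alternate_sym/alt_adj].
- have ij : i != j :> nat by apply: contraNneq uv => /val_inj ->.
  split=> // /not_alternate_aa-[] //; have := ltn_ord i; have := ltn_ord j; lia.
- by split=> // /not_alternate_ab-[] //; have := ltn_ord i; lia.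
- have [adj_alt alt_adj] := alternate_cb k5 (ltn_ord j).
  by split=> [/adj_alt/alternate_sym | /alternate_sym/alt_adj].
- by split=> // /alternate_sym /not_alternate_ab-[] //; have := ltn_ord j; lia.
- by [].
Qed.

Theorem lemma14 (k : nat) : 5 <= k -> odd k -> word_representable (@F2adj k).
Proof.
move=> k5 _; exists (pmap (@decode k) (word k)); split=> [v | u v uv].
  by rewrite mem_pmap -(encodeK v) map_f // mem_word_encode //; lia.
have encode_word : map (@encode k) (pmap (@decode k) (word k)) = word k.
  rewrite (pmap_filter (@decodeK k)); apply/all_filterP.
  by apply: sub_all (word_lt k5) => z; apply: decode_lt.
have := alternate_map (pmap (@decode k) (word k)) u v (pcan_inj (@encodeK k)).
rewrite encode_word; exact: iff_trans (F2adj_alternate k5 uv).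
Qed.
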